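(* Let $N$ be a positive integer and define polynomials $P_n(x),Q_n(x)$ ($n\ge0$) by $P_0=1$, $P_1=(N+1)-x$, $Q_0=1$, $Q_1=N+1$, and for $n\ge2$ $$P_n=a_nP_{n-1}+b_nP_{n-2},\qquad Q_n=a_nQ_{n-1}+b_nQ_{n-2},$$ where $a_n=N+n$, $b_{2m}=mx$ and $b_{2m+1}=-(N+m)x$ for $m\ge1$. Then for every $n\ge1$: $$P_{2n-1}(x)=\sum_{j=0}^{n}(-1)^j\binom{n}{j}\prod_{l=1}^{2n-j-1}(N+l)\cdot x^j,\qquad P_{2n}(x)=\sum_{j=0}^{n}(-1)^j\binom{n}{j}\prod_{l=1}^{2n-j}(N+l)\cdot x^j,$$ $$Q_{2n-1}(x)=\sum_{j=0}^{n-1}\sum_{k=0}^{j}(-1)^{j-k}(2n-j-1)_k\binom{n-k-1}{j-k}\prod_{l=k+1}^{2n-j-1}(N+l)\cdot x^j,$$ $$Q_{2n}(x)=\sum_{j=0}^{n}\sum_{k=0}^{j}(-1)^{j-k}(2n-j)_k\binom{n-k-1}{j-k}\prod_{l=k+1}^{2n-j}(N+l)\cdot x^j.$$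
   Context: $(y)_k=y(y-1)\cdots(y-k+1)$ denotes the falling factorial, $(y)_0=1$. Conventions: $\binom{a}{k}=0$ for integers $0\le a<k$, $\binom{-1}{0}=1$, and an empty product equals $1$. The quotients $P_n(x)/Q_n(x)$ are the convergents of the continued fraction expansion $\frac{x^N/N!}{e^x-\sum_{i=0}^{N-1}x^i/i!}=1-\cfrac{x}{N+1+\cfrac{x}{N+2-\cfrac{(N+1)x}{N+3+\cfrac{2x}{N+4-\cdots}}}}$. *)

From mathcomp Require Import all_boot all_order all_algebra.
Set Implicit Arguments. Unset Strict Implicit. Unset Printing Implicit Defensive.
Import Order.TTheory GRing.Theory Num.Theory.
Local Open Scope ring_scope.

Definition cf_a (N n : nat) : {poly int} := (N + n)%:R.

(* b_{2m} = m x,  b_{2m+1} = -(N+m) x  (only used for n >= 2) *)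
Definition cf_b (N n : nat) : {poly int} :=
  if odd n then - ((N + n./2)%:R *: 'X) else (n./2)%:R *: 'X.

(* cf_rec N u0 u1 n = (U_n, U_{n+1}) where U_0 = u0, U_1 = u1 and
   U_n = a_n U_{n-1} + b_n U_{n-2} for n >= 2. *)
Fixpoint cf_rec (N : nat) (u0 u1 : {poly int}) (n : nat) : {poly int} * {poly int} :=
  match n with
  | 0%N => (u0, u1)
  | n'.+1 => let: (p, q) := cf_rec N u0 u1 n' in
             (q, cf_a N n'.+2 * q + cf_b N n'.+2 * p)
  end.

Definition cfP (N n : nat) : {poly int} := (cf_rec N 1 ((N + 1)%:R - 'X) n).1.
Definition cfQ (N n : nat) : {poly int} := (cf_rec N 1 (N + 1)%:R n).1.

From mathcomp Require Import all_boot all_order all_algebra.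
From mathcomp Require Import ring zify.

(* With h = uphalf m and U(s, k) = (s)_k * prod_(k < l <= s) (N + l), the
   coefficient of x^j in P_m, resp. Q_m, is
     sum_(k <= j) (-1)^(j-k) w(h, k, j-k) U(m-j, k)
   for the weight w(h, k, b) = [k = 0] C(h, b), resp. w(h, k, b) = C(h-k-1, b).
   Substituting U(s+1, k) = (N+s+1+k) U(s, k) + k U(s, k-1) into the three-term
   recurrence and comparing the factors of each U(s, k) reduces the recurrence
   to a few binomial identities for w, which both weights satisfy.  An identity
   is only needed where U(s, k) can be nonzero, i.e. for k <= s; this is the
   side condition k <= n of the section hypotheses. *)

Set Implicit Arguments.
Unset Strict Implicit.
Unset Printing Implicit Defensive.

Import GRing.Theory.
Local Open Scope ring_scope.

Lemma cf_rec_eq (N : nat) (u0 u1 : {poly int}) (f : nat -> {poly int}) :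
  f 0%N = u0 -> f 1%N = u1 ->
  (forall m, f m.+2 = cf_a N m.+2 * f m.+1 + cf_b N m.+2 * f m) ->
  forall m, (cf_rec N u0 u1 m).1 = f m.
Proof.
move=> f0 f1 frec m; suff -> : cf_rec N u0 u1 m = (f m, f m.+1) by [].
by elim: m => [|m /= ->]; rewrite ?f0 ?f1 ?frec.
Qed.

Lemma cf_b_even N n : cf_b N n.*2.+2 = n.+1%:R *: 'X.
Proof. by rewrite /cf_b /= odd_double /= doubleK. Qed.

Lemma cf_b_odd N n : cf_b N n.*2.+3 = - (N + n.+1)%:R *: 'X.
Proof. by rewrite /cf_b /= odd_double /= uphalf_double scaleNr. Qed.

Section WeightedCoefficients.

Variable N : nat.

Definition fact_ratio (k s : nat) : nat := \prod_(k.+1 <= l < s.+1) (N + l).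

Definition ffact_ratio (s k : nat) : nat := s ^_ k * fact_ratio k s.

Lemma fact_ratio_nil k s : (s <= k)%N -> fact_ratio k s = 1%N.
Proof. by move=> lesk; rewrite /fact_ratio big_geq. Qed.

Lemma fact_ratioS k s : (k <= s)%N -> fact_ratio k s.+1 = (fact_ratio k s * (N + s.+1))%N.
Proof. by move=> leks; rewrite /fact_ratio big_nat_recr. Qed.

Lemma fact_ratio_recl k s : (k < s)%N -> fact_ratio k s = ((N + k.+1) * fact_ratio k.+1 s)%N.
Proof. by move=> ltks; rewrite /fact_ratio big_ltn. Qed.

Lemma ffact_ratio_small s k : (s < k)%N -> ffact_ratio s k = 0%N.
Proof. by move=> ltsk; rewrite /ffact_ratio ffact_small. Qed.

Lemma ffact_ratio_n0 s : ffact_ratio s 0 = fact_ratio 0 s.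
Proof. by rewrite /ffact_ratio ffactn0 mul1n. Qed.

Lemma ffact_ratioS s k :
  ffact_ratio s.+1 k = ((N + s.+1 + k) * ffact_ratio s k + k * ffact_ratio s k.-1)%N.
Proof.
rewrite /ffact_ratio; case: k => [|k] /=; first by rewrite !ffactn0 fact_ratioS // addn0; ring.
case: (ltngtP k s) => [ltks|ltsk|<-].
- rewrite ffactSS ffactnSr fact_ratioS // (fact_ratio_recl ltks).
  have [d ->] : exists d, s = (d + k.+1)%N by exists (s - k.+1)%N; rewrite subnK.
  rewrite (_ : d + k.+1 - k = d.+1)%N; last by lia.
  ring.
- by rewrite !ffact_small //; lia.
- by rewrite ffactnn ffact_small // ffactnn !fact_ratio_nil // factS; ring.
Qed.

Lemma sum_ffact_ratioS (F : nat -> int) s i :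
  \sum_(k < i.+2) F k * (ffact_ratio s.+1 k)%:R =
  \sum_(k < i.+2) F k * ((N + s.+1 + k) * ffact_ratio s k)%:R
  + \sum_(k < i.+1) F k.+1 * (k.+1 * ffact_ratio s k)%:R.
Proof.
under eq_bigr do rewrite ffact_ratioS natrD mulrDr.
by rewrite big_split /= [X in _ + X = _]big_ord_recl mul0n mulr0 add0r.
Qed.

Variable w : nat -> nat -> nat -> nat.

Definition cfcoef (m j : nat) : int :=
  \sum_(k < j.+1) (-1) ^+ (j - k) * (w (uphalf m) k (j - k))%:R * (ffact_ratio (m - j) k)%:R.

Definition cfpoly (m : nat) : {poly int} := \poly_(j < m.+1) cfcoef m j.

Hypothesis w_head : forall h k, w h k 0 = w 0 k 0.
Hypothesis w_vanish : forall h b, (h < b)%N -> w h 0 b = 0%N.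
Hypothesis w_even : forall n k b, (k <= n)%N ->
  (b.+1 * w n.+1 k b.+1 + k.+1 * w n.+1 k.+1 b = n.+1 * w n k b)%N.
Hypothesis w_pascal : forall n k b, (k <= n)%N ->
  w n.+2 k b.+1 = (w n.+1 k b.+1 + w n.+1 k b)%N.
Hypothesis w_odd : forall n k b, (k <= n)%N ->
  (k.+1 * w n.+2 k.+1 b + b.+1 * w n.+1 k b.+1 + b * w n.+1 k b = n.+1 * w n.+1 k b)%N.

Lemma cfcoef0 m : cfcoef m 0 = (w 0 0 0)%:R * (ffact_ratio m 0)%:R.
Proof. by rewrite /cfcoef big_ord1 w_head sub0n subn0 expr0 mul1r. Qed.

Lemma cfcoef_vanish m j : (uphalf m < j)%N -> (m <= j)%N -> cfcoef m j = 0.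
Proof.
move=> ltj lemj; rewrite /cfcoef (eqP lemj) big_ord_recl big1 => [|k _].
  by rewrite subn0 w_vanish // mulr0 mul0r addr0.
by rewrite ffact_ratio_small // mulr0.
Qed.

Lemma coef_cfpoly m i : (cfpoly m)`_i = cfcoef m i.
Proof.
rewrite coef_poly; case: ltnP => // ltmi; have lemi := ltnW ltmi.
by rewrite cfcoef_vanish //; lia.
Qed.

Lemma cfcoef_even_term n s k b : (s + k + b = n.*2)%N ->
  (-1) ^+ b.+1 * (w n.+1 k b.+1)%:R * ((N + s.+1 + k) * ffact_ratio s k)%:R
  + (-1) ^+ b * (w n.+1 k.+1 b)%:R * (k.+1 * ffact_ratio s k)%:R
  = (N + n.*2.+2)%:R * ((-1) ^+ b.+1 * (w n.+1 k b.+1)%:R * (ffact_ratio s k)%:R)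
  + n.+1%:R * ((-1) ^+ b * (w n k b)%:R * (ffact_ratio s k)%:R) :> int.
Proof.
move=> hs; have [lekn|ltnk] := leqP k n; last first.
  by rewrite ffact_ratio_small ?muln0 ?mulr0 ?addr0 //; lia.
rewrite -hs; apply/eqP; rewrite -subr_eq0; apply/eqP.
transitivity (((-1) ^+ b : int) * (ffact_ratio s k)%:R *
  ((b.+1 * w n.+1 k b.+1 + k.+1 * w n.+1 k.+1 b)%:R - (n.+1 * w n k b)%:R)).
  by rewrite exprS; ring.
by rewrite w_even // subrr mulr0.
Qed.

Lemma cfcoef_odd_term n s k b : (s + k + b = n.*2.+1)%N ->
  (-1) ^+ b.+1 * (w n.+2 k b.+1)%:R * ((N + s.+1 + k) * ffact_ratio s k)%:R
  + (-1) ^+ b * (w n.+2 k.+1 b)%:R * (k.+1 * ffact_ratio s k)%:R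
  = (N + n.*2.+3)%:R * ((-1) ^+ b.+1 * (w n.+1 k b.+1)%:R * (ffact_ratio s k)%:R)
  - (N + n.+1)%:R * ((-1) ^+ b * (w n.+1 k b)%:R * (ffact_ratio s k)%:R) :> int.
Proof.
move=> hs; have [lekn|ltnk] := leqP k n; last first.
  by rewrite ffact_ratio_small ?muln0 ?mulr0 ?subr0 ?addr0 //; lia.
rewrite w_pascal // -hs; apply/eqP; rewrite -subr_eq0; apply/eqP.
transitivity (((-1) ^+ b : int) * (ffact_ratio s k)%:R *
  ((k.+1 * w n.+2 k.+1 b + b.+1 * w n.+1 k b.+1 + b * w n.+1 k b)%:R
   - (n.+1 * w n.+1 k b)%:R
   + (w n.+1 k b)%:R * ((n.*2.+1)%:R - (s + k + b)%:R))).
  by rewrite exprS -addnn; ring.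
by rewrite w_odd // hs !subrr mulr0 addr0 mulr0.
Qed.

Lemma cfcoef_step_even n i :
  cfcoef n.*2.+2 i.+1 = (N + n.*2.+2)%:R * cfcoef n.*2.+1 i.+1 + n.+1%:R * cfcoef n.*2 i.
Proof.
have [lei|gti] := leqP i n.*2; last by rewrite !cfcoef_vanish ?mulr0 ?addr0 //; lia.
set s := (n.*2 - i)%N; rewrite /cfcoef -/s.
have [-> -> ->] : [/\ uphalf n.*2.+2 = n.+1, uphalf n.*2.+1 = n.+1 & uphalf n.*2 = n].
  by split; lia.
have [-> ->] : (n.*2.+2 - i.+1 = s.+1)%N /\ (n.*2.+1 - i.+1 = s)%N by split; lia.
rewrite (sum_ffact_ratioS (fun k => (-1) ^+ (i.+1 - k) * (w n.+1 k (i.+1 - k))%:R)).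
rewrite !big_distrr !(big_ord_recr i.+1) /= addrAC [RHS]addrAC -!big_split /=.
congr (_ + _).
  apply: eq_bigr => k _; have lek : (k <= i)%N by rewrite -ltnS.
  by rewrite subSS (subSn lek); apply: cfcoef_even_term; rewrite /s; lia.
rewrite subnn (_ : N + s.+1 + i.+1 = N + n.*2.+2)%N ?natrM; [ring | lia].
Qed.

Lemma cfcoef_step_odd n i :
  cfcoef n.*2.+3 i.+1
  = (N + n.*2.+3)%:R * cfcoef n.*2.+2 i.+1 - (N + n.+1)%:R * cfcoef n.*2.+1 i.
Proof.
have [lei|gti] := leqP i n.*2.+1; last by rewrite !cfcoef_vanish ?mulr0 ?subr0 //; lia.
set s := (n.*2.+1 - i)%N; rewrite /cfcoef -/s.
have [-> -> ->] : [/\ uphalf n.*2.+3 = n.+2, uphalf n.*2.+2 = n.+1 & uphalf n.*2.+1 = n.+1].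
  by split; lia.
have [-> ->] : (n.*2.+3 - i.+1 = s.+1)%N /\ (n.*2.+2 - i.+1 = s)%N by split; lia.
rewrite (sum_ffact_ratioS (fun k => (-1) ^+ (i.+1 - k) * (w n.+2 k (i.+1 - k))%:R)).
rewrite !big_distrr -sumrN !(big_ord_recr i.+1) /= addrAC [RHS]addrAC -!big_split /=.
congr (_ + _).
  apply: eq_bigr => k _; have lek : (k <= i)%N by rewrite -ltnS.
  by rewrite subSS (subSn lek); apply: cfcoef_odd_term; rewrite /s; lia.
rewrite subnn w_head [w n.+1 _ _]w_head.
rewrite (_ : N + s.+1 + i.+1 = N + n.*2.+3)%N ?natrM; [ring | lia].
Qed.

Lemma cfpoly_rec m : cfpoly m.+2 = cf_a N m.+2 * cfpoly m.+1 + cf_b N m.+2 * cfpoly m.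
Proof.
have [beta -> step] : exists2 beta, cf_b N m.+2 = beta *: 'X &
    forall i, cfcoef m.+2 i.+1 = (N + m.+2)%:R * cfcoef m.+1 i.+1 + beta * cfcoef m i.
  rewrite -[m]odd_double_half; case: (odd m); rewrite ?add0n ?add1n.
    by exists (- (N + m./2.+1)%:R); [exact: cf_b_odd | move=> i; rewrite mulNr cfcoef_step_odd].
  by exists (m./2.+1)%:R; [exact: cf_b_even | exact: cfcoef_step_even].
apply/polyP => -[|i]; rewrite coefD /cf_a mulr_natl coefMn -scalerAl coefZ coefXM !coef_cfpoly.
  by rewrite mulr0 addr0 !cfcoef0 ffact_ratioS addn0 mul0n addn0 natrM -mulr_natl; ring.
by rewrite step mulr_natl.
Qed.

Lemma cf_rec_cfpoly u0 u1 :
  cfpoly 0 = u0 -> cfpoly 1 = u1 -> forall m, (cf_rec N u0 u1 m).1 = cfpoly m.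
Proof. by move=> f0 f1; apply: cf_rec_eq => // m; apply: cfpoly_rec. Qed.

End WeightedCoefficients.

Lemma mul_bin_leftD a b : (b.+1 * 'C(a, b.+1) + b * 'C(a, b) = a * 'C(a, b))%N.
Proof.
rewrite mul_bin_left -mulnDl; case: (leqP b a) => [/subnK -> // | ltab].
by rewrite bin_small // !muln0.
Qed.

Definition weightP (h k b : nat) : nat := if k is 0 then 'C(h, b) else 0.

Lemma weightP_head h k : weightP h k 0 = weightP 0 k 0.
Proof. by case: k => [|k] //=; rewrite !bin0. Qed.

Lemma weightP_vanish h b : (h < b)%N -> weightP h 0 b = 0%N.
Proof. exact: bin_small. Qed.

Lemma weightP_even n k b : (k <= n)%N ->
  (b.+1 * weightP n.+1 k b.+1 + k.+1 * weightP n.+1 k.+1 b = n.+1 * weightP n k b)%N.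
Proof. by case: k => [|k] _ /=; rewrite !muln0 ?addn0 // -mul_bin_diag. Qed.

Lemma weightP_pascal n k b : (k <= n)%N ->
  weightP n.+2 k b.+1 = (weightP n.+1 k b.+1 + weightP n.+1 k b)%N.
Proof. by case: k => [|k] _ //=; rewrite binS. Qed.

Lemma weightP_odd n k b : (k <= n)%N ->
  (k.+1 * weightP n.+2 k.+1 b + b.+1 * weightP n.+1 k b.+1 + b * weightP n.+1 k b
   = n.+1 * weightP n.+1 k b)%N.
Proof. by case: k => [|k] _ /=; rewrite !muln0 ?add0n // mul_bin_leftD. Qed.

(* For k >= h the truncated subtraction gives 'C(0, b), the convention C(-1, 0) = 1. *)
Definition weightQ (h k b : nat) : nat := 'C(h - k - 1, b).

Lemma weightQ_head h k : weightQ h k 0 = weightQ 0 k 0.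
Proof. by rewrite /weightQ !bin0. Qed.

Lemma weightQ_vanish h b : (h < b)%N -> weightQ h 0 b = 0%N.
Proof. by move=> lthb; rewrite /weightQ bin_small //; lia. Qed.

Lemma weightQ_even n k b : (k <= n)%N ->
  (b.+1 * weightQ n.+1 k b.+1 + k.+1 * weightQ n.+1 k.+1 b = n.+1 * weightQ n k b)%N.
Proof.
move=> /subnK <-; set a := (n - k)%N; rewrite /weightQ.
have [-> ->] : ((a + k).+1 - k - 1 = a)%N /\ (a + k - k - 1 = a.-1)%N by split; lia.
by rewrite -mul_bin_diag -mulnDl addnS.
Qed.

Lemma weightQ_pascal n k b : (k <= n)%N ->
  weightQ n.+2 k b.+1 = (weightQ n.+1 k b.+1 + weightQ n.+1 k b)%N.
Proof.
move=> lekn; rewrite /weightQ.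
by have [-> ->] : (n.+2 - k - 1 = (n - k).+1)%N /\ (n.+1 - k - 1 = n - k)%N by split; lia.
Qed.

Lemma weightQ_odd n k b : (k <= n)%N ->
  (k.+1 * weightQ n.+2 k.+1 b + b.+1 * weightQ n.+1 k b.+1 + b * weightQ n.+1 k b
   = n.+1 * weightQ n.+1 k b)%N.
Proof.
move=> lekn; rewrite /weightQ.
rewrite (_ : n.+1 - k - 1 = n - k)%N; last by lia.
by rewrite -addnA mul_bin_leftD -mulnDl addSn subnKC.
Qed.

Lemma cfcoef_weightP N m j :
  cfcoef N weightP m j = (-1) ^+ j * ('C(uphalf m, j) * fact_ratio N 0 (m - j))%:R.
Proof.
rewrite /cfcoef big_ord_recl big1 => [|k _]; last by rewrite lift0 /= mulr0 mul0r.
by rewrite subn0 ffact_ratio_n0 natrM mulrA addr0.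
Qed.

Lemma cfP_cfpoly N m : cfP N m = cfpoly N weightP m.
Proof.
apply: (cf_rec_cfpoly weightP_head weightP_vanish weightP_even weightP_pascal weightP_odd).
  apply/polyP => i; rewrite (coef_cfpoly _ weightP_vanish) cfcoef_weightP coef1.
  by case: i => [|i]; rewrite ?bin0n ?mul0n ?mulr0 // fact_ratio_nil.
apply/polyP => i; rewrite (coef_cfpoly _ weightP_vanish) cfcoef_weightP.
rewrite coefB coefMn coef1 coefX.
case: i => [|[|i]] /=.
- by rewrite subr0 expr0 mul1r bin0 mul1n /fact_ratio big_nat1.
- by rewrite fact_ratio_nil // bin1 muln1 expr1 mul0rn sub0r mulN1r.
- by rewrite bin_small // mul0n mulr0 mul0rn subr0.
Qed.

Lemma cfP_closed N m :
  cfP N m = \poly_(j < (uphalf m).+1)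
    ((-1) ^+ j * ('C(uphalf m, j) * \prod_(1 <= l < (m - j).+1) (N + l))%:R).
Proof.
rewrite cfP_cfpoly; apply/polyP => i.
rewrite (coef_cfpoly _ weightP_vanish) cfcoef_weightP coef_poly.
by case: ltnP => // ltmi; rewrite bin_small ?mul0n ?mulr0.
Qed.

Lemma cfcoef_weightQ N m j :
  cfcoef N weightQ m j = \sum_(k < j.+1)
    (-1) ^+ (j - k) * ((m - j) ^_ k * 'C(uphalf m - k - 1, j - k) * fact_ratio N k (m - j))%:R.
Proof. by apply: eq_bigr => k _; rewrite -mulrA -natrM mulnCA mulnA. Qed.

Lemma cfcoef_weightQ_vanish N m j : (m./2 < j)%N -> cfcoef N weightQ m j = 0.
Proof.
move=> ltj; rewrite cfcoef_weightQ big1 // => k _; have ltk := ltn_ord k.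
have [lekmj|ltmjk] := leqP k (m - j); last by rewrite ffact_small // !mul0n mulr0.
by rewrite bin_small ?muln0 ?mul0n ?mulr0 //; lia.
Qed.

Lemma cfQ_cfpoly N m : cfQ N m = cfpoly N weightQ m.
Proof.
apply: (cf_rec_cfpoly weightQ_head weightQ_vanish weightQ_even weightQ_pascal weightQ_odd).
  apply/polyP => -[|i]; rewrite (coef_cfpoly _ weightQ_vanish) coef1.
    by rewrite (cfcoef0 _ weightQ_head) ffact_ratio_n0 fact_ratio_nil.
  by rewrite cfcoef_weightQ_vanish.
apply/polyP => -[|i]; rewrite (coef_cfpoly _ weightQ_vanish) coefMn coef1.
  by rewrite (cfcoef0 _ weightQ_head) ffact_ratio_n0 /fact_ratio big_nat1 mul1r.
by rewrite cfcoef_weightQ_vanish // mul0rn.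
Qed.

Lemma cfQ_closed N m :
  cfQ N m = \poly_(j < (m./2).+1) \sum_(k < j.+1)
    (-1) ^+ (j - k) * ((m - j) ^_ k * 'C(uphalf m - k - 1, j - k)
      * \prod_(k.+1 <= l < (m - j).+1) (N + l))%:R.
Proof.
rewrite cfQ_cfpoly; apply/polyP => i.
rewrite (coef_cfpoly _ weightQ_vanish) coef_poly.
by case: ltnP => ltmi; [exact: cfcoef_weightQ | exact: cfcoef_weightQ_vanish].
Qed.

Theorem theorem4 (N : nat) (hN : (0 < N)%N) (n : nat) (hn : (1 <= n)%N) :
  [/\ cfP N (2 * n - 1) =
        \sum_(j < n.+1)
          ((-1) ^+ j * ('C(n, j) * \prod_(1 <= l < (2 * n - j - 1).+1) (N + l))%:R)
            *: 'X^j,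
      cfP N (2 * n) =
        \sum_(j < n.+1)
          ((-1) ^+ j * ('C(n, j) * \prod_(1 <= l < (2 * n - j).+1) (N + l))%:R)
            *: 'X^j,
      cfQ N (2 * n - 1) =
        \sum_(j < n) \sum_(k < j.+1)
          ((-1) ^+ (j - k) * ((2 * n - j - 1) ^_ k * 'C(n - k - 1, j - k)
              * \prod_(k.+1 <= l < (2 * n - j - 1).+1) (N + l))%:R) *: 'X^j
    & cfQ N (2 * n) =
        \sum_(j < n.+1) \sum_(k < j.+1)
          ((-1) ^+ (j - k) * ((2 * n - j) ^_ k * 'C(n - k - 1, j - k)
              * \prod_(k.+1 <= l < (2 * n - j).+1) (N + l))%:R) *: 'X^j].
Proof.
case: n hn => // n _.
have [-> ->] : (2 * n.+1 = n.*2.+2)%N /\ (n.*2.+2 - 1 = n.*2.+1)%N by split; lia.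
rewrite !cfP_closed !cfQ_closed !poly_def.
have [-> -> -> ->] : [/\ uphalf n.*2.+1 = n.+1, uphalf n.*2.+2 = n.+1,
                        (n.*2.+1)./2 = n & (n.*2.+2)./2 = n.+1] by split; lia.
by split; apply: eq_bigr => j _; rewrite ?scaler_suml ?(subnAC _ j 1) ?subn1.
Qed.
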